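(* Let $\sigma : \mathcal{S} \to \mathcal{A}$ be a $\sim$-strategy; then so is $\tilde{\sigma} : \tilde{\mathcal{S}} \to \tilde{\mathcal{A}}$.
   Context: $e \rightarrow e'$ denotes immediate causal dependency in an event structure ($e<e'$ with nothing strictly between). An essp $\mathcal{A}$ is an event structure with polarities $A$ with a symmetry $\tilde A$ and open, jointly monic maps $l_A,r_A:\tilde A\to A$ forming an equivalence relation; configurations of $\tilde A$ correspond to bijections $\theta:x\cong y$ of the isomorphism family $\mathbb{S}_A$. $\tilde{\mathcal{A}}$ denotes $\tilde A$ equipped with its canonical higher symmetry, whose isomorphism family consists of bijections between $\theta,\theta'\in\mathbb{S}_A$ corresponding to commuting squares of isomorphisms in $\mathbb{S}_A$. For a map $\sigma$ of essps, $\tilde\sigma:\tilde A\to\tilde B$ is the induced map on symmetries, $\theta\mapsto\sigma\theta$. A $\sim$-strategy $\sigma:\mathcal{S}\to\mathcal{A}$ is a map of essps which is courteous (if $s_1 \rightarrow s_2$ with $\mathrm{pol}(s_1)=+$ or $\mathrm{pol}(s_2)=-$ then $\sigma s_1 \rightarrow \sigma s_2$), strong-receptive (if $\theta\in\mathbb{S}_S$ and $\sigma\theta$ extends in $\mathbb{S}_A$ by a pair $(a_1,a_2)$ of negative events, there is a unique extension $\theta\cup\{(s_1,s_2)\}\in\mathbb{S}_S$ with $\sigma s_i=a_i$), and thin ($\mathcal{S}$ is thin: whenever $\theta\in\mathbb{S}_S$ has two extensions in $\mathbb{S}_S$ by positive events only whose domains are compatible, their union is in $\mathbb{S}_S$).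 *)

From Stdlib Require Import List.
Set Implicit Arguments.
Unset Strict Implicit.

Definition finite {T : Type} (X : T -> Prop) : Prop :=
  exists l : list T, forall x, X x <-> In x l.

Definition subset {T : Type} (X Y : T -> Prop) : Prop := forall x, X x -> Y x.

Definition rel (T : Type) := T -> T -> Prop.

Definition subrel {T : Type} (r r' : rel T) : Prop := forall a b, r a b -> r' a b.

Definition dom {T : Type} (r : rel T) : T -> Prop := fun a => exists b, r a b.
Definition cod {T : Type} (r : rel T) : T -> Prop := fun b => exists a, r a b.

(** [r] is (the graph of) a bijection [dom r ≅ cod r] *)
Definition is_bij {T : Type} (r : rel T) : Prop :=
  (forall a b b', r a b -> r a b' -> b = b') /\
  (forall a a' b, r a b -> r a' b -> a = a').

Definition image {T U : Type} (f : T -> U) (X : T -> Prop) : U -> Prop :=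
  fun b => exists a, X a /\ f a = b.

Definition img_rel {T U : Type} (f : T -> U) (r : rel T) : rel U :=
  fun b b' => exists a a', r a a' /\ f a = b /\ f a' = b'.

Definition ext {T : Type} (r : rel T) (a b : T) : rel T :=
  fun x y => r x y \/ (x = a /\ y = b).

(* polarity: [true] = positive (+), [false] = negative (-) *)
Record esp : Type := {
  ev : Type;
  leq : ev -> ev -> Prop;
  con : (ev -> Prop) -> Prop;
  pol : ev -> bool }.

Arguments leq {e} _ _.
Arguments con {e} _.
Arguments pol {e} _.

Record is_es (E : esp) : Prop := {
  es_refl : forall e : ev E, leq e e;
  es_antisym : forall e e' : ev E, leq e e' -> leq e' e -> e = e';
  es_trans : forall e e' e'' : ev E, leq e e' -> leq e' e'' -> leq e e'';
  es_fin_causes : forall e : ev E, finite (fun e' => leq e' e);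
  es_con_fin : forall X : ev E -> Prop, con X -> finite X;
  es_con_single : forall e : ev E, con (fun e' => e' = e);
  es_con_sub : forall X Y : ev E -> Prop, con Y -> subset X Y -> con X;
  es_con_down : forall (X : ev E -> Prop) (e e' : ev E),
      con X -> X e' -> leq e e' -> con (fun x => X x \/ x = e) }.

Definition config (E : esp) (x : ev E -> Prop) : Prop :=
  finite x /\ (forall e e' : ev E, x e' -> leq e e' -> x e) /\ con x.

Definition lt (E : esp) (e e' : ev E) : Prop := leq e e' /\ e <> e'.

Definition imm (E : esp) (e e' : ev E) : Prop :=
  lt e e' /\ ~ (exists e'', lt e e'' /\ lt e'' e').

Record is_isofam (E : esp) (S : rel (ev E) -> Prop) : Prop := {
  iso_wf : forall th, S th ->
      config (dom th) /\ config (cod th) /\ is_bij th /\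
      (forall a b, th a b -> pol a = pol b);
  iso_id : forall x, config x -> S (fun a b => x a /\ a = b);
  iso_inv : forall th, S th -> S (fun a b => th b a);
  iso_comp : forall th th', S th -> S th' -> (forall b, cod th b <-> dom th' b) ->
      S (fun a c => exists b, th a b /\ th' b c);
  iso_restr : forall th x, S th -> config x -> subset x (dom th) ->
      S (fun a b => th a b /\ x a);
  iso_ext : forall th x, S th -> config x -> subset (dom th) x ->
      exists th', S th' /\ subrel th th' /\ (forall a, dom th' a <-> x a) }.

Record essp : Type := {
  es :> esp;
  sym : rel (ev es) -> Prop }.

Arguments sym : clear implicits.

Definition is_essp (A : essp) : Prop := is_es A /\ is_isofam (sym A).

Definition es_map (A B : esp) (f : ev A -> ev B) : Prop :=
  (forall x, config x -> config (image f x)) /\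
  (forall x, config x -> forall a a', x a -> x a' -> f a = f a' -> a = a').

Definition essp_map (A B : essp) (f : ev A -> ev B) : Prop :=
  is_essp A /\ is_essp B /\ es_map f /\
  (forall a, pol (f a) = pol a) /\
  (forall th, sym A th -> sym B (img_rel f th)).

Definition courteous (S A : essp) (s : ev S -> ev A) : Prop :=
  forall s1 s2 : ev S, imm s1 s2 -> (pol s1 = true \/ pol s2 = false) ->
    imm (s s1) (s s2).

Definition strong_receptive (S A : essp) (s : ev S -> ev A) : Prop :=
  forall th, sym S th ->
  forall a1 a2 : ev A, pol a1 = false -> pol a2 = false ->
    ~ dom (img_rel s th) a1 ->
    sym A (ext (img_rel s th) a1 a2) ->
    exists! p : ev S * ev S,
      sym S (ext th (fst p) (snd p)) /\ s (fst p) = a1 /\ s (snd p) = a2.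

Definition pos_ext (E : esp) (th th1 : rel (ev E)) : Prop :=
  subrel th th1 /\ (forall a b, th1 a b -> ~ th a b -> pol a = true).

Definition thin (S : essp) : Prop :=
  forall th th1 th2, sym S th -> sym S th1 -> sym S th2 ->
    pos_ext th th1 -> pos_ext th th2 ->
    (exists z, config z /\ subset (dom th1) z /\ subset (dom th2) z) ->
    sym S (fun a b => th1 a b \/ th2 a b).

Definition sim_strategy (S A : essp) (s : ev S -> ev A) : Prop :=
  essp_map s /\ courteous s /\ strong_receptive s /\ thin S.

(** [th] is the prime element [p]_th of the isomorphism family *)
Definition prime_at (A : essp) (th : rel (ev A)) (p : ev A * ev A) : Prop :=
  sym A th /\ th (fst p) (snd p) /\
  (forall th', sym A th' -> subrel th' th -> th' (fst p) (snd p) -> th' = th).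

(** events of ~A : the complete primes of S_A, given with their top pair *)
Definition tev (A : essp) : Type :=
  { q : rel (ev A) * (ev A * ev A) | prime_at (fst q) (snd q) }.

Definition trel {A : essp} (e : tev A) : rel (ev A) := fst (proj1_sig e).
Definition ttop {A : essp} (e : tev A) : ev A * ev A := snd (proj1_sig e).

Definition tilde_esp (A : essp) : esp := {|
  ev := tev A;
  leq := fun e e' => subrel (trel e) (trel e');
  con := fun X => finite X /\
           exists th, sym A th /\ forall e, X e -> subrel (trel e) th;
  pol := fun e => pol (fst (ttop e)) |}.

(** the bijection in S_A corresponding to a configuration of ~A *)
Definition tunion {A : essp} (X : tev A -> Prop) : rel (ev A) :=
  fun a b => exists e, X e /\ ttop e = (a, b).

(** canonical higher symmetry: bijections between th, th' in S_A arising from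
    commuting squares  phi2 o th = th' o phi1  with phi1, phi2 in S_A *)
Definition higher_sym (A : essp) (Phi : rel (tev A)) : Prop :=
  config (E := tilde_esp A) (dom Phi) /\ config (E := tilde_esp A) (cod Phi) /\
  is_bij Phi /\
  exists phi1 phi2, sym A phi1 /\ sym A phi2 /\
    (forall a, dom phi1 a <-> dom (tunion (dom Phi)) a) /\
    (forall a, cod phi1 a <-> dom (tunion (cod Phi)) a) /\
    (forall b, dom phi2 b <-> cod (tunion (dom Phi)) b) /\
    (forall b, cod phi2 b <-> cod (tunion (cod Phi)) b) /\
    (forall e e', Phi e e' ->
       phi1 (fst (ttop e)) (fst (ttop e')) /\ phi2 (snd (ttop e)) (snd (ttop e'))).

Definition tilde (A : essp) : essp := {|
  es := tilde_esp A;
  sym := @higher_sym A |}.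

Definition prime_closure (A : essp) (psi : rel (ev A)) (q : ev A * ev A) : rel (ev A) :=
  fun a b => forall th', sym A th' -> subrel th' psi -> th' (fst q) (snd q) -> th' a b.

(** specification of ~sigma on events: the prime [p]_th is sent to the prime
    [sigma p]_(sigma th); on configurations this is th |-> sigma th *)
Definition tilde_map_spec (S A : essp) (s : ev S -> ev A)
    (t : tev S -> tev A) : Prop :=
  forall e : tev S,
    ttop (t e) = (s (fst (ttop e)), s (snd (ttop e))) /\
    trel (t e) = @prime_closure A (img_rel s (trel e)) (s (fst (ttop e)), s (snd (ttop e))).

(* A symmetry th of S is a configuration of ~S (the set of its primes), and
   ~sigma maps it to sigma th.  A higher symmetry Phi : th ~ th' is determined by
   the two symmetries it induces between the domains and between the codomains
   of th and th' ([hfst Phi] and [hsnd Phi]), and ~sigma maps these by sigma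
   again.  So every condition on ~sigma reduces to the same condition on sigma:
   courtesy through the top pairs of primes, thinness by thinness of S applied to
   the two induced symmetries, and strong receptivity by applying receptivity of
   sigma three times -- to th and to the two induced symmetries -- the added
   events being matched by uniqueness of receptive extensions of identities. *)

From Stdlib Require Import List ClassicalEpsilon.
From Stdlib Require Import FunctionalExtensionality PropExtensionality ProofIrrelevance.
Set Implicit Arguments.
Unset Strict Implicit.

Lemma set_ext {T} (X Y : T -> Prop) : (forall x, X x <-> Y x) -> X = Y.
Proof.
  intro H; apply functional_extensionality; intro x; apply propositional_extensionality; auto.
Qed.

Lemma rel_ext {T} (r r' : rel T) : (forall a b, r a b <-> r' a b) -> r = r'.
Proof. intro H; apply functional_extensionality; intro a; apply set_ext; auto. Qed.

Lemma finite_subset {T} (X Y : T -> Prop) : finite Y -> subset X Y -> finite X.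
Proof.
  intros [l Hl] Hs.
  exists (filter (fun x => if excluded_middle_informative (X x) then true else false) l).
  intro x; rewrite filter_In.
  destruct (excluded_middle_informative (X x)) as [Hx|Hx]; split; try tauto.
  - intro; split; auto; apply Hl, Hs, Hx.
  - intros [_ H]; discriminate.
Qed.

Lemma finite_union {T} (X Y : T -> Prop) :
  finite X -> finite Y -> finite (fun x => X x \/ Y x).
Proof. intros [l Hl] [m Hm]; exists (l ++ m); intro x; rewrite in_app_iff, Hl, Hm; tauto. Qed.

Lemma finite_single {T} (a : T) : finite (fun x => x = a).
Proof. exists (a :: nil); intro x; simpl; intuition congruence. Qed.

Lemma finite_injective {T U} (X : T -> Prop) (Y : U -> Prop) (f : U -> T) :
  finite X -> (forall u, Y u -> X (f u)) ->
  (forall u u', Y u -> Y u' -> f u = f u' -> u = u') -> finite Y.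
Proof.
  intros [l Hl] HXY Hinj.
  set (g := fun t => match excluded_middle_informative (exists u, Y u /\ f u = t) with
                     | left H => proj1_sig (constructive_indefinite_description _ H) :: nil
                     | right _ => nil end).
  exists (flat_map g l); intro u; rewrite in_flat_map; unfold g; split.
  - intro Hu; exists (f u); split; [apply Hl, HXY, Hu|].
    destruct excluded_middle_informative as [H|H]; [|exfalso; eauto].
    destruct constructive_indefinite_description as [v [Hv Hfv]]; left; simpl; auto.
  - intros [t [_ Ht]]; destruct excluded_middle_informative as [H|H]; [|destruct Ht].
    destruct constructive_indefinite_description as [v [Hv Hfv]]; simpl in Ht.
    destruct Ht as [<-|[]]; auto.
Qed.

Definition inv {T} (r : rel T) : rel T := fun a b => r b a.
Definition comp {T} (r r' : rel T) : rel T := fun a c => exists b, r a b /\ r' b c.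
Definition diag {T} (x : T -> Prop) : rel T := fun a b => x a /\ a = b.
Definition restrict {T} (r : rel T) (x : T -> Prop) : rel T := fun a b => r a b /\ x a.
Definition union {T} (r r' : rel T) : rel T := fun a b => r a b \/ r' a b.

Definition conjugate {T} (phi1 r phi2 : rel T) : rel T := comp (inv phi1) (comp r phi2).

Lemma conjugateE {T} (phi1 r phi2 : rel T) a' b' :
  conjugate phi1 r phi2 a' b' <-> exists a b, phi1 a a' /\ r a b /\ phi2 b b'.
Proof. unfold conjugate, comp, inv; firstorder. Qed.

Lemma conjugate_mono {T} (phi1 r phi2 psi1 r' psi2 : rel T) :
  subrel phi1 psi1 -> subrel r r' -> subrel phi2 psi2 ->
  subrel (conjugate phi1 r phi2) (conjugate psi1 r' psi2).
Proof.
  intros H1 H H2 a b; rewrite !conjugateE; intros [x [y [Hx [Hxy Hy]]]]; exists x, y; auto.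
Qed.

Lemma dom_ext {T} (r : rel T) a b : dom (ext r a b) = fun x => dom r x \/ x = a.
Proof.
  apply set_ext; intro x; unfold dom, ext; split.
  - intros [y [H|[-> _]]]; [left; exists y|right]; auto.
  - intros [[y H]| ->]; [exists y|exists b]; unfold ext; auto.
Qed.

Lemma cod_ext {T} (r : rel T) a b : cod (ext r a b) = fun x => cod r x \/ x = b.
Proof.
  apply set_ext; intro x; unfold cod, ext; split.
  - intros [y [H|[_ ->]]]; [left; exists y|right]; auto.
  - intros [[y H]| ->]; [exists y|exists a]; unfold ext; auto.
Qed.

Lemma dom_union {T} (r r' : rel T) : dom (union r r') = fun x => dom r x \/ dom r' x.
Proof. apply set_ext; intro x; unfold dom, union; firstorder. Qed.

Lemma cod_union {T} (r r' : rel T) : cod (union r r') = fun x => cod r x \/ cod r' x.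
Proof. apply set_ext; intro x; unfold cod, union; firstorder. Qed.

Lemma dom_diag {T} (x : T -> Prop) : dom (diag x) = x.
Proof.
  apply set_ext; intro a; unfold dom, diag; split; [intros [b [H _]]|intro H; exists a]; auto.
Qed.

Lemma cod_diag {T} (x : T -> Prop) : cod (diag x) = x.
Proof.
  apply set_ext; intro a; unfold cod, diag; split; [intros [b [H <-]]|intro H; exists a]; auto.
Qed.

Lemma dom_restrict {T} (r : rel T) (x : T -> Prop) :
  subset x (dom r) -> dom (restrict r x) = x.
Proof. intro H; apply set_ext; intro a; unfold dom, restrict; firstorder. Qed.

Lemma dom_comp {T} (r r' : rel T) :
  subset (cod r) (dom r') -> dom (comp r r') = dom r.
Proof.
  intro H; apply set_ext; intro a; unfold dom, comp; split; [firstorder|].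
  intros [b Hab]; destruct (H b) as [c Hbc]; [exists a; auto|eauto].
Qed.

Lemma cod_comp {T} (r r' : rel T) :
  subset (dom r') (cod r) -> cod (comp r r') = cod r'.
Proof.
  intro H; apply set_ext; intro c; unfold cod, comp; split; [firstorder|].
  intros [b Hbc]; destruct (H b) as [a Hab]; [exists c; auto|eauto].
Qed.

Lemma img_rel_pair {T U} (f : T -> U) (r : rel T) a b : r a b -> img_rel f r (f a) (f b).
Proof. intro H; exists a, b; auto. Qed.

Lemma img_rel_mono {T U} (f : T -> U) (r r' : rel T) :
  subrel r r' -> subrel (img_rel f r) (img_rel f r').
Proof. intros H x y [a [b [Hab [<- <-]]]]; apply img_rel_pair; auto. Qed.

Lemma dom_img_rel {T U} (f : T -> U) (r : rel T) : dom (img_rel f r) = image f (dom r).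
Proof.
  apply set_ext; intro c; unfold dom, img_rel, image; split.
  - intros [d [a [b [H [<- _]]]]]; exists a; split; [exists b|]; auto.
  - intros [a [[b H] <-]]; exists (f b), a, b; auto.
Qed.

Lemma cod_img_rel {T U} (f : T -> U) (r : rel T) : cod (img_rel f r) = image f (cod r).
Proof.
  apply set_ext; intro c; unfold cod, img_rel, image; split.
  - intros [d [a [b [H [_ <-]]]]]; exists b; split; [exists a|]; auto.
  - intros [b [[a H] <-]]; exists (f a), a, b; auto.
Qed.

Lemma img_rel_img_rel {T U V} (f : T -> U) (g : U -> V) (r : rel T) :
  img_rel g (img_rel f r) = img_rel (fun a => g (f a)) r.
Proof.
  apply rel_ext; intros x y; unfold img_rel; split.
  - intros [u [v [[a [b [H [<- <-]]]] [<- <-]]]]; exists a, b; auto.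
  - intros [a [b [H [<- <-]]]]; exists (f a), (f b); split; [exists a, b|]; auto.
Qed.

Lemma img_rel_inv {T U} (f : T -> U) (r : rel T) : img_rel f (inv r) = inv (img_rel f r).
Proof. apply rel_ext; intros x y; unfold img_rel, inv; firstorder. Qed.

Lemma img_rel_union {T U} (f : T -> U) (r r' : rel T) :
  img_rel f (union r r') = union (img_rel f r) (img_rel f r').
Proof. apply rel_ext; intros x y; unfold img_rel, union; firstorder. Qed.

Lemma img_rel_ext {T U} (f : T -> U) (r : rel T) a b :
  img_rel f (ext r a b) = ext (img_rel f r) (f a) (f b).
Proof.
  apply rel_ext; intros x y; unfold img_rel, ext; split.
  - intros [u [v [[H|[-> ->]] [<- <-]]]]; [left; exists u, v|right]; auto.
  - intros [[u [v [H [<- <-]]]]|[-> ->]]; [exists u, v|exists a, b]; unfold ext; auto.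
Qed.

Lemma img_rel_diag {T U} (f : T -> U) (x : T -> Prop) :
  img_rel f (diag x) = diag (image f x).
Proof.
  apply rel_ext; intros u v; unfold img_rel, diag, image; split.
  - intros [a [b [[H <-] [<- <-]]]]; split; [exists a|]; auto.
  - intros [[a [H <-]] <-]; exists a, a; auto.
Qed.

Lemma img_rel_restrict {T U} (f : T -> U) (r : rel T) (x : T -> Prop) :
  (forall a a', dom r a -> x a' -> f a = f a' -> a = a') ->
  img_rel f (restrict r x) = restrict (img_rel f r) (image f x).
Proof.
  intro Hinj; apply rel_ext; intros u v; unfold img_rel, restrict, image; split.
  - intros [a [b [[Hab Ha] [<- <-]]]]; split; [exists a, b|exists a]; auto.
  - intros [[a [b [Hab [<- <-]]]] [a' [Ha' E]]].
    rewrite (Hinj a a') in Hab; [|exists b|..]; auto.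
    exists a', b; rewrite E; auto.
Qed.

Lemma img_rel_comp {T U} (f : T -> U) (r r' : rel T) :
  (forall b b', cod r b -> dom r' b' -> f b = f b' -> b = b') ->
  img_rel f (comp r r') = comp (img_rel f r) (img_rel f r').
Proof.
  intro Hinj; apply rel_ext; intros u w; unfold img_rel, comp; split.
  - intros [a [c [[b [Hab Hbc]] [<- <-]]]]; exists (f b); split; apply img_rel_pair; auto.
  - intros [v [[a [b [Hab [<- <-]]]] [b' [c [Hbc [E <-]]]]]].
    rewrite <- (Hinj b b') in Hbc; [|exists a|exists c|]; auto.
    exists a, c; split; [exists b|]; auto.
Qed.

Lemma ext_diag {T} (x : T -> Prop) a : ext (diag x) a a = diag (fun y => x y \/ y = a).
Proof.
  apply rel_ext; intros u v; unfold ext, diag; split.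
  - intros [[H <-]|[-> ->]]; auto.
  - intros [[H| ->] <-]; auto.
Qed.

Lemma conjugate_ext {T} (phi1 r phi2 : rel T) a b a' b' :
  ~ dom phi1 a -> ~ dom r a -> ~ cod r b -> ~ dom phi2 b ->
  conjugate (ext phi1 a a') (ext r a b) (ext phi2 b b') = ext (conjugate phi1 r phi2) a' b'.
Proof.
  intros H1 Hr Hr' H2; apply rel_ext; intros u v; rewrite !conjugateE; unfold ext; split.
  - intros [x [y [Hx [[Hxy|[-> ->]] Hy]]]].
    + destruct Hx as [Hx|[-> _]]; [|exfalso; apply Hr; exists y; auto].
      destruct Hy as [Hy|[-> _]]; [|exfalso; apply Hr'; exists x; auto].
      left; apply conjugateE; exists x, y; auto.
    + destruct Hx as [Hx|[_ ->]]; [exfalso; apply H1; exists u; auto|].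
      destruct Hy as [Hy|[_ ->]]; [exfalso; apply H2; exists v; auto|auto].
  - intros [Huv|[-> ->]]; [apply conjugateE in Huv|exists a, b; auto].
    destruct Huv as [x [y [Hx [Hxy Hy]]]]; exists x, y; auto.
Qed.

Definition below (E : esp) (a : ev E) : ev E -> Prop := fun y => leq y a.

Definition tfst {A : essp} (e : tev A) : ev A := fst (ttop e).
Definition tsnd {A : essp} (e : tev A) : ev A := snd (ttop e).

Section Essp.
Variable A : essp.
Hypothesis HA : is_essp A.

Lemma essp_es : is_es A. Proof. exact (proj1 HA). Qed.
Lemma essp_isofam : is_isofam (sym A). Proof. exact (proj2 HA). Qed.

Lemma sym_dom th : sym A th -> config (dom th).
Proof. intro H; apply (iso_wf essp_isofam H). Qed.
Lemma sym_cod th : sym A th -> config (cod th).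
Proof. intro H; apply (iso_wf essp_isofam H). Qed.
Lemma sym_fun th a b b' : sym A th -> th a b -> th a b' -> b = b'.
Proof. intro H; apply (iso_wf essp_isofam H). Qed.
Lemma sym_inj th a a' b : sym A th -> th a b -> th a' b -> a = a'.
Proof. intro H; apply (iso_wf essp_isofam H). Qed.
Lemma sym_pol th a b : sym A th -> th a b -> pol a = pol b.
Proof. intro H; apply (iso_wf essp_isofam H). Qed.
Lemma sym_inv th : sym A th -> sym A (inv th).
Proof. apply (iso_inv essp_isofam). Qed.

Lemma sym_conjugate phi1 th phi2 : sym A phi1 -> sym A th -> sym A phi2 ->
  dom phi1 = dom th -> dom phi2 = cod th -> sym A (conjugate phi1 th phi2).
Proof.
  intros H1 Hth H2 E1 E2.
  assert (Hc : sym A (comp th phi2)).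
  { apply (iso_comp essp_isofam Hth H2); intro b; rewrite E2; tauto. }
  apply (iso_comp essp_isofam (sym_inv H1) Hc); intro a.
  change (dom phi1 a <-> dom (comp th phi2) a).
  rewrite dom_comp, E1; [tauto|rewrite E2; intros b Hb; exact Hb].
Qed.

Lemma config_down (x : ev A -> Prop) a a' : config x -> x a -> leq a' a -> x a'.
Proof. intros [_ [H _]] Ha Hl; eauto. Qed.

Lemma config_subset (x y : ev A -> Prop) : config y -> subset x y ->
  (forall e e', x e' -> leq e e' -> x e) -> config x.
Proof.
  intros [Hf [_ Hc]] Hs Hdx; split; [eapply finite_subset; eauto|split; auto].
  eapply (es_con_sub essp_es); eauto.
Qed.

Lemma config_below (x : ev A -> Prop) a : config x -> x a -> config (below a).
Proof.
  intros Hx Ha; apply (config_subset Hx).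
  - intros y Hy; eapply config_down; eauto.
  - intros e e' H1 H2; eapply (es_trans essp_es); eauto.
Qed.

Lemma sym_restrict_below th a b : sym A th -> th a b -> sym A (restrict th (below a)).
Proof.
  intros Hth Hab; apply (iso_restr essp_isofam); auto.
  - eapply config_below; [apply (sym_dom Hth)|exists b; auto].
  - intros y Hy; eapply config_down; [apply (sym_dom Hth)|exists b; eauto|auto].
Qed.

(* Restricting [inv th] below [b] gives a symmetry, whose codomain is down-closed. *)
Lemma sym_leq th a b a' b' : sym A th -> th a b -> th a' b' -> leq a' a -> leq b' b.
Proof.
  intros Hth Hab Ha'b' Hl.
  assert (Hr : sym A (restrict (inv th) (below b)))
    by (apply sym_restrict_below with a; auto; apply sym_inv; auto).
  assert (Hx : cod (restrict (inv th) (below b)) a').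
  { eapply config_down; [apply (sym_cod Hr)| |exact Hl].
    exists b; split; [exact Hab|apply (es_refl essp_es)]. }
  destruct Hx as [y [Hy1 Hy2]]; rewrite (sym_fun Hth Ha'b' Hy1); auto.
Qed.

Lemma prime_restrict_below th a b : sym A th -> th a b -> prime_at (restrict th (below a)) (a, b).
Proof.
  intros Hth Hab; split; [eapply sym_restrict_below; eauto|split].
  - split; [auto|apply (es_refl essp_es)].
  - simpl; intros th' Hth' Hsub Hth'ab; apply rel_ext; intros x y; split; [apply Hsub|].
    intros [Hxy Hxa].
    assert (Hx : dom th' x) by (eapply config_down; [apply (sym_dom Hth')|exists b; eauto|auto]).
    destruct Hx as [y' Hy']; destruct (Hsub _ _ Hy') as [Hy'' _].
    rewrite (sym_fun Hth Hxy Hy''); auto.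
Qed.

Lemma prime_closure_below th a b : sym A th -> th a b ->
  prime_closure th (a, b) = restrict th (below a).
Proof.
  intros Hth Hab; apply rel_ext; intros x y; split.
  - intro H; apply H; [apply (sym_restrict_below Hth Hab)|intros u v []; auto|].
    split; [auto|apply (es_refl essp_es)].
  - intros [Hxy Hxa] th' Hth' Hs H'; simpl in H'.
    assert (Hx : dom th' x) by (eapply config_down; [apply (sym_dom Hth')|exists b; eauto|auto]).
    destruct Hx as [y' Hy']; rewrite (sym_fun Hth Hxy (Hs _ _ Hy')); auto.
Qed.

Lemma prime_at_restrict r a b th : prime_at r (a, b) -> sym A th -> subrel r th ->
  r = restrict th (below a).
Proof.
  intros [Hr [Hab Hmin]] Hth Hs; simpl in *.
  assert (Hra : restrict r (below a) = r).
  { apply Hmin; [eapply sym_restrict_below; eauto|intros x y [H _]; auto|].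
    split; [auto|apply (es_refl essp_es)]. }
  apply rel_ext; intros x y; split.
  - rewrite <- Hra; intros [Hxy Hxa]; split; auto.
  - intros [Hxy Hxa].
    assert (Hx : dom r x) by (eapply config_down; [apply (sym_dom Hr)|exists b; eauto|auto]).
    destruct Hx as [y' Hy']; rewrite (sym_fun Hth Hxy (Hs _ _ Hy')); auto.
Qed.

Lemma tev_sym (e : tev A) : sym A (trel e).
Proof. apply (proj2_sig e). Qed.
Lemma tev_top (e : tev A) : trel e (tfst e) (tsnd e).
Proof. apply (proj2_sig e). Qed.

Lemma trel_restrict (e : tev A) th : sym A th -> subrel (trel e) th ->
  trel e = restrict th (below (tfst e)).
Proof.
  intros Hth Hs; assert (H : prime_at (trel e) (ttop e)) by apply (proj2_sig e).
  unfold tfst; destruct (ttop e) as [a b]; eapply prime_at_restrict; eauto.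
Qed.

Lemma tev_eq (e e' : tev A) : trel e = trel e' -> ttop e = ttop e' -> e = e'.
Proof.
  destruct e as [[r p] H], e' as [[r' p'] H']; unfold trel, ttop; simpl; intros; subst.
  f_equal; apply proof_irrelevance.
Qed.

Lemma tev_eq_of_tfst th (e e' : tev A) : sym A th -> subrel (trel e) th ->
  subrel (trel e') th -> tfst e = tfst e' -> e = e'.
Proof.
  intros Hth H1 H2 Hf; apply tev_eq.
  - rewrite (trel_restrict Hth H1), (trel_restrict Hth H2), Hf; auto.
  - assert (T1 := H1 _ _ (tev_top e)); assert (T2 := H2 _ _ (tev_top e')).
    unfold tfst, tsnd in *; rewrite Hf in T1.
    destruct (ttop e), (ttop e'); simpl in *; subst; f_equal; eapply sym_fun; eauto.
Qed.

Lemma ex_tev th a b : sym A th -> th a b -> exists e : tev A, subrel (trel e) th /\ ttop e = (a, b).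
Proof.
  intros Hth Hab.
  exists (exist _ (restrict th (below a), (a, b)) (prime_restrict_below Hth Hab)).
  split; [intros x y []|]; auto.
Qed.

Lemma tev_leq_tfst (e e' : tev A) : subrel (trel e) (trel e') -> leq (tfst e) (tfst e').
Proof.
  intro Hs; assert (H := Hs _ _ (tev_top e)).
  rewrite (trel_restrict (tev_sym e') (fun x y h => h)) in H; apply H.
Qed.

Lemma tev_leq_of_tfst th (e e' : tev A) : sym A th -> subrel (trel e) th ->
  subrel (trel e') th -> leq (tfst e) (tfst e') -> subrel (trel e) (trel e').
Proof.
  intros Hth H1 H2 Hl; rewrite (trel_restrict Hth H1), (trel_restrict Hth H2).
  intros x y [Hxy Hx]; split; auto; eapply (es_trans essp_es); eauto.
Qed.

Lemma tev_lt_tfst (e e' : tev A) : lt (E := tilde_esp A) e e' -> lt (tfst e) (tfst e').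
Proof.
  intros [Hle Hne]; split; [apply tev_leq_tfst; auto|].
  intro Heq; apply Hne; apply (tev_eq_of_tfst (tev_sym e')); auto; intros x y h; exact h.
Qed.

End Essp.

(** * Configurations of the event structure of symmetries *)

Definition tconfig (A : essp) (X : tev A -> Prop) : Prop := config (E := tilde_esp A) X.

Definition primes (A : essp) (th : rel (ev A)) : tev A -> Prop :=
  fun e => subrel (trel e) th.

Section Tconfig.
Variable A : essp.
Hypothesis HA : is_essp A.

Lemma tconfigE (X : tev A -> Prop) : tconfig X <->
  finite X /\ (forall e e', X e' -> subrel (trel e) (trel e') -> X e) /\
  (exists th, sym A th /\ forall e, X e -> subrel (trel e) th).
Proof. unfold tconfig, config; simpl; tauto. Qed.

Lemma dom_tunion (X : tev A -> Prop) : dom (tunion X) = image tfst X.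
Proof.
  apply set_ext; intro a; unfold dom, tunion, image, tfst; split.
  - intros [b [e [He E]]]; exists e; rewrite E; auto.
  - intros [e [He <-]]; exists (tsnd e), e; split; auto; apply surjective_pairing.
Qed.

Lemma cod_tunion (X : tev A -> Prop) : cod (tunion X) = image tsnd X.
Proof.
  apply set_ext; intro b; unfold cod, tunion, image, tsnd; split.
  - intros [a [e [He E]]]; exists e; rewrite E; auto.
  - intros [e [He <-]]; exists (tfst e), e; split; auto; apply surjective_pairing.
Qed.

Lemma tunion_top (X : tev A -> Prop) e : X e -> tunion X (tfst e) (tsnd e).
Proof. intro He; exists e; split; auto; apply surjective_pairing. Qed.

Lemma tunion_mono (X Y : tev A -> Prop) : subset X Y -> subrel (tunion X) (tunion Y).
Proof. intros H a b [e [He Ht]]; exists e; auto. Qed.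

Lemma tunion_add (X : tev A -> Prop) f :
  tunion (fun e => X e \/ e = f) = ext (tunion X) (tfst f) (tsnd f).
Proof.
  apply rel_ext; intros a b; unfold tunion, ext, tfst, tsnd; split.
  - intros [e [[H| ->] E]]; [left; eauto|right; rewrite E; auto].
  - intros [[e [H E]]|[-> ->]]; [exists e; auto|exists f; split; auto].
    apply surjective_pairing.
Qed.

Lemma trel_sub_tunion (X : tev A -> Prop) e : tconfig X -> X e -> subrel (trel e) (tunion X).
Proof.
  intros HX He x y Hxy; apply tconfigE in HX; destruct HX as [_ [Hd _]].
  destruct (ex_tev HA (tev_sym e) Hxy) as [e' [Hs Ht]]; exists e'; split; eauto.
Qed.

(* The union is the restriction of any bounding symmetry to a configuration. *)
Lemma sym_tunion (X : tev A -> Prop) : tconfig X -> sym A (tunion X).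
Proof.
  intro HX; assert (HX' := HX); apply tconfigE in HX'; destruct HX' as [_ [_ [w [Hw Hsw]]]].
  assert (Hsub : subrel (tunion X) w).
  { intros a b [e [He Ht]]; assert (T := Hsw _ He _ _ (tev_top e)).
    unfold tfst, tsnd in T; rewrite Ht in T; auto. }
  assert (Hx : config (dom (tunion X))).
  { apply (config_subset HA (sym_dom HA Hw)); [intros a [b Hab]; exists b; auto|].
    intros a0 a Ha Hl; rewrite dom_tunion in Ha; destruct Ha as [e [He <-]].
    assert (Hda : dom (trel e) a0).
    { apply (config_down (a := tfst e) (sym_dom HA (tev_sym e))); auto.
      exists (tsnd e); apply tev_top. }
    destruct Hda as [b' Hb']; exists b'; apply (trel_sub_tunion HX He); auto. }
  replace (tunion X) with (restrict w (dom (tunion X))).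
  - apply (iso_restr (essp_isofam HA)); auto; intros a [b Hab]; exists b; auto.
  - apply rel_ext; intros a b; unfold restrict; split.
    + intros [Hab [b' Hab']]; rewrite (sym_fun HA Hw Hab (Hsub _ _ Hab')); auto.
    + intro H; split; [auto|exists b; auto].
Qed.

Lemma tfst_inj (X : tev A -> Prop) e e' : tconfig X -> X e -> X e' -> tfst e = tfst e' -> e = e'.
Proof.
  intros HX He He'; apply (tev_eq_of_tfst HA (sym_tunion HX)); apply trel_sub_tunion; auto.
Qed.

Lemma tsnd_inj (X : tev A -> Prop) e e' : tconfig X -> X e -> X e' -> tsnd e = tsnd e' -> e = e'.
Proof.
  intros HX He He' E; apply (tfst_inj HX He He').
  apply (sym_inj HA (sym_tunion HX) (b := tsnd e)); [|rewrite E]; apply tunion_top; auto.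
Qed.

Lemma tconfig_primes (th : rel (ev A)) : sym A th -> tconfig (primes th).
Proof.
  intro Hth; apply tconfigE; split; [|split].
  - apply finite_injective with (dom th) tfst.
    + apply (sym_dom HA Hth).
    + intros e He; exists (tsnd e); apply He, tev_top.
    + intros u u' Hu Hu' Hf; eapply tev_eq_of_tfst; eauto.
  - intros e e' He' Hs x y Hxy; auto.
  - exists th; split; auto.
Qed.

Lemma tunion_primes (th : rel (ev A)) : sym A th -> tunion (primes th) = th.
Proof.
  intro Hth; apply rel_ext; intros a b; split.
  - intros [e [He Ht]]; assert (T := He _ _ (tev_top e)).
    unfold tfst, tsnd in T; rewrite Ht in T; auto.
  - intro Hab; destruct (ex_tev HA Hth Hab) as [e [He Ht]]; exists e; auto.
Qed.

Lemma primes_tunion_add (X : tev A -> Prop) f : tconfig X ->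
  sym A (ext (tunion X) (tfst f) (tsnd f)) -> subrel (trel f) (ext (tunion X) (tfst f) (tsnd f)) ->
  primes (ext (tunion X) (tfst f) (tsnd f)) = fun e => X e \/ e = f.
Proof.
  intros HX Hth Hf; apply set_ext; intro e; split.
  - intro He; destruct (He _ _ (tev_top e)) as [[e0 [He0 T]]|[E _]].
    + left; replace e with e0; auto.
      apply (tev_eq_of_tfst HA Hth); auto.
      * intros x y Hxy; left; apply (trel_sub_tunion HX He0); auto.
      * unfold tfst; rewrite T; auto.
    + right; apply (tev_eq_of_tfst HA Hth); auto.
  - intros [He| ->]; auto.
    intros x y Hxy; left; apply (trel_sub_tunion HX He); auto.
Qed.

Lemma tconfig_union (X Y : tev A -> Prop) w : tconfig X -> tconfig Y -> sym A w ->
  (forall e, X e \/ Y e -> subrel (trel e) w) -> tconfig (fun e => X e \/ Y e).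
Proof.
  intros HX HY Hw Hs; apply tconfigE in HX, HY; apply tconfigE.
  destruct HX as [Fx [Dx _]], HY as [Fy [Dy _]].
  split; [apply finite_union; auto|split; [|exists w; auto]].
  intros e e' [h|h] Hl; [left|right]; eauto.
Qed.

Lemma tilde_is_es : is_es (tilde_esp A).
Proof.
  split; simpl.
  - intros e x y h; auto.
  - intros e e' H1 H2; apply (tev_eq_of_tfst HA (tev_sym e)); auto; [intros x y h; exact h|].
    apply (es_antisym (essp_es HA)); apply tev_leq_tfst; auto.
  - intros e e' e'' H1 H2 x y h; auto.
  - intro e; apply (proj1 (tconfigE _) (tconfig_primes (tev_sym e))).
  - intros X [H _]; auto.
  - intro e; split; [apply finite_single|exists (trel e); split; [apply tev_sym|]].
    intros e' ->; intros x y h; auto.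
  - intros X Y [Hf [w [Hw Hs]]] Hxy; split; [eapply finite_subset; eauto|exists w; auto].
  - intros X e e' [Hf [w [Hw Hs]]] He' Hl.
    split; [apply finite_union; auto; apply finite_single|exists w; split; auto].
    intros x [Hx| ->]; auto; intros u v h; apply (Hs _ He'); auto.
Qed.

End Tconfig.

(** * The higher symmetry on ~A *)

Definition hfst (A : essp) (Phi : rel (tev A)) : rel (ev A) := img_rel tfst Phi.
Definition hsnd (A : essp) (Phi : rel (tev A)) : rel (ev A) := img_rel tsnd Phi.

Lemma dom_hfst (A : essp) (Phi : rel (tev A)) : dom (hfst Phi) = dom (tunion (dom Phi)).
Proof. unfold hfst; rewrite dom_img_rel, dom_tunion; auto. Qed.

Lemma dom_hsnd (A : essp) (Phi : rel (tev A)) : dom (hsnd Phi) = cod (tunion (dom Phi)).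
Proof. unfold hsnd; rewrite dom_img_rel, cod_tunion; auto. Qed.

Lemma hfst_ext (A : essp) (Phi : rel (tev A)) e f :
  hfst (ext Phi e f) = ext (hfst Phi) (tfst e) (tfst f).
Proof. apply img_rel_ext. Qed.

Lemma hsnd_ext (A : essp) (Phi : rel (tev A)) e f :
  hsnd (ext Phi e f) = ext (hsnd Phi) (tsnd e) (tsnd f).
Proof. apply img_rel_ext. Qed.

Section Higher.
Variable A : essp.
Hypothesis HA : is_essp A.

Lemma is_bij_of_hfst (Phi : rel (tev A)) : tconfig (dom Phi) -> tconfig (cod Phi) ->
  sym A (hfst Phi) -> is_bij Phi.
Proof.
  intros Hd Hc H1; split.
  - intros e f f' Hf Hf'; apply (tfst_inj HA Hc); [exists e|exists e|]; auto.
    apply (sym_fun HA H1 (a := tfst e)); apply img_rel_pair; auto.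
  - intros e e' f He He'; apply (tfst_inj HA Hd); [exists f|exists f|]; auto.
    apply (sym_inj HA H1 (b := tfst f)); apply img_rel_pair; auto.
Qed.

Lemma sym_eq_img_rel (phi : rel (ev A)) (g : tev A -> ev A) (Phi : rel (tev A)) :
  sym A phi -> (forall a, dom phi a <-> image g (dom Phi) a) ->
  (forall e f, Phi e f -> phi (g e) (g f)) -> phi = img_rel g Phi.
Proof.
  intros Hphi Hd W; apply rel_ext; intros a a'; split.
  - intro H; destruct (proj1 (Hd a) (ex_intro _ a' H)) as [e [[f Hef] <-]].
    rewrite (sym_fun HA Hphi H (W _ _ Hef)); apply img_rel_pair; auto.
  - intros [e [f [Hef [<- <-]]]]; auto.
Qed.

Lemma higher_symE (Phi : rel (tev A)) : higher_sym Phi <->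
  tconfig (dom Phi) /\ tconfig (cod Phi) /\ sym A (hfst Phi) /\ sym A (hsnd Phi).
Proof.
  split.
  - intros [Hd [Hc [_ [phi1 [phi2 [Hp1 [Hp2 [H1 [_ [H3 [_ W]]]]]]]]]]].
    rewrite dom_tunion in H1; rewrite cod_tunion in H3.
    unfold hfst, hsnd; rewrite <- (sym_eq_img_rel Hp1 H1), <- (sym_eq_img_rel Hp2 H3);
      [|intros e f Hef; apply (W _ _ Hef)..]; auto.
  - intros [Hd [Hc [H1 H2]]]; split; [auto|split; [auto|split; [apply is_bij_of_hfst; auto|]]].
    exists (hfst Phi), (hsnd Phi); unfold hfst, hsnd.
    rewrite !dom_img_rel, !cod_img_rel, !dom_tunion, !cod_tunion.
    do 6 (split; [tauto|]); intros e f Hef.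
    split; [exact (img_rel_pair tfst Hef)|exact (img_rel_pair tsnd Hef)].
Qed.

Lemma higher_sym_pol (Phi : rel (tev A)) e f : higher_sym Phi -> Phi e f ->
  pol (tfst e) = pol (tfst f).
Proof.
  intros H Hef; apply higher_symE in H.
  apply (sym_pol HA (proj1 (proj2 (proj2 H)))); apply img_rel_pair; auto.
Qed.

Lemma higher_sym_leq (Phi : rel (tev A)) e f e' f' : higher_sym Phi -> Phi e f -> Phi e' f' ->
  subrel (trel e') (trel e) -> subrel (trel f') (trel f).
Proof.
  intros H Hef Hef' Hl; apply higher_symE in H; destruct H as [_ [Hc [H1 _]]].
  apply (tev_leq_of_tfst HA (sym_tunion HA Hc)); try (apply trel_sub_tunion; auto; eexists; eauto).
  apply (sym_leq HA H1 (img_rel_pair tfst Hef) (img_rel_pair tfst Hef')), tev_leq_tfst; auto.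
Qed.

Lemma tunion_cod (Phi : rel (tev A)) : higher_sym Phi ->
  tunion (cod Phi) = conjugate (hfst Phi) (tunion (dom Phi)) (hsnd Phi).
Proof.
  intro H; apply higher_symE in H; destruct H as [Hd [Hc [H1 H2]]].
  apply rel_ext; intros u v; rewrite conjugateE; split.
  - intros [f [[e Hef] Ht]].
    replace u with (tfst f) by (unfold tfst; rewrite Ht; auto).
    replace v with (tsnd f) by (unfold tsnd; rewrite Ht; auto).
    exists (tfst e), (tsnd e); split; [|split].
    + apply img_rel_pair; auto.
    + apply tunion_top; exists f; auto.
    + apply img_rel_pair; auto.
  - intros [a [b [[e [f [Hef [<- <-]]]] [[e' [He' Ht]] Hb]]]].
    assert (Ee : e = e')
      by (apply (tfst_inj HA Hd); [exists f|..]; auto; unfold tfst; rewrite Ht; auto).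
    subst e'; assert (Eb : tsnd e = b) by (unfold tsnd; rewrite Ht; auto).
    rewrite <- Eb in Hb; rewrite (sym_fun HA H2 Hb (img_rel_pair tsnd Hef)).
    exists f; split; [exists e; auto|apply surjective_pairing].
Qed.

Lemma higher_sym_inv (Phi : rel (tev A)) : higher_sym Phi -> higher_sym (inv Phi).
Proof.
  rewrite !higher_symE; unfold hfst, hsnd; rewrite !img_rel_inv.
  intros [Hd [Hc [H1 H2]]]; split; [exact Hc|split; [exact Hd|split; apply sym_inv; auto]].
Qed.

Lemma higher_sym_diag (X : tev A -> Prop) : tconfig X -> higher_sym (diag X).
Proof.
  intro HX; assert (Ht := sym_tunion HA HX).
  apply higher_symE; unfold hfst, hsnd; rewrite dom_diag, cod_diag, !img_rel_diag.
  rewrite <- dom_tunion, <- cod_tunion.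
  split; [auto|split; [auto|split; apply (iso_id (essp_isofam HA))]].
  - apply (sym_dom HA Ht).
  - apply (sym_cod HA Ht).
Qed.

Lemma higher_sym_comp (Phi Phi' : rel (tev A)) : higher_sym Phi -> higher_sym Phi' ->
  (forall f, cod Phi f <-> dom Phi' f) -> higher_sym (comp Phi Phi').
Proof.
  rewrite !higher_symE; intros [Hd [Hc [H1 H2]]] [Hd' [Hc' [H1' H2']]] E.
  apply set_ext in E.
  assert (Hinj : forall g : tev A -> ev A,
            (forall e e', cod Phi e -> cod Phi e' -> g e = g e' -> e = e') ->
            img_rel g (comp Phi Phi') = comp (img_rel g Phi) (img_rel g Phi')).
  { intros g Hg; apply img_rel_comp; rewrite <- E; auto. }
  unfold hfst, hsnd.
  rewrite dom_comp, cod_comp by (rewrite E; intros ? h; exact h).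
  rewrite (Hinj tfst (fun e e' He He' => tfst_inj HA Hc He He')).
  rewrite (Hinj tsnd (fun e e' He He' => tsnd_inj HA Hc He He')).
  split; [auto|split; [auto|split; apply (iso_comp (essp_isofam HA)); auto]];
    intro x; rewrite cod_img_rel, dom_img_rel, E; tauto.
Qed.

Lemma higher_sym_restrict (Phi : rel (tev A)) (X : tev A -> Prop) : higher_sym Phi ->
  tconfig X -> subset X (dom Phi) -> higher_sym (restrict Phi X).
Proof.
  intros H HX Hsub; assert (Hinv := higher_sym_inv H).
  apply higher_symE in H; destruct H as [Hd [Hc [H1 H2]]].
  assert (HcR : tconfig (cod (restrict Phi X))).
  { apply tconfigE in Hc; destruct Hc as [Hcf [Hcd [w [Hw Hws]]]].
    apply tconfigE; split; [|split].
    - eapply finite_subset; [exact Hcf|intros f [e [h _]]; exists e; auto].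
    - intros g f [e [Hef HXe]] Hl.
      assert (Hg : cod Phi g) by (apply Hcd with f; auto; exists e; auto).
      destruct Hg as [e' He']; exists e'; split; auto.
      apply tconfigE in HX; apply (proj1 (proj2 HX)) with e; auto.
      apply (higher_sym_leq Hinv (e := f) (f := e) (e' := g) (f' := e')); auto.
    - exists w; split; auto; intros f [e [h _]]; apply Hws; exists e; auto. }
  apply higher_symE; rewrite dom_restrict by auto; unfold hfst, hsnd.
  rewrite (img_rel_restrict (f := tfst) (x := X)
            (fun a a' Ha Ha' => tfst_inj HA Hd Ha (Hsub _ Ha'))).
  rewrite (img_rel_restrict (f := tsnd) (x := X) (fun a a' Ha Ha' => tsnd_inj HA Hd Ha (Hsub _ Ha'))).
  rewrite <- dom_tunion, <- cod_tunion.
  split; [auto|split; [auto|split; apply (iso_restr (essp_isofam HA)); auto]].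
  - apply (sym_dom HA), sym_tunion; auto.
  - rewrite dom_tunion, dom_img_rel; intros a [e [He <-]]; exists e; auto.
  - apply (sym_cod HA), sym_tunion; auto.
  - rewrite cod_tunion, dom_img_rel; intros a [e [He <-]]; exists e; auto.
Qed.

(* Extend the induced symmetries to the domain and codomain of [tunion X]; the
   extended higher symmetry relates each prime of [X] to the prime of the
   conjugated symmetry sharing its image under the first extension. *)
Lemma higher_sym_extend (Phi : rel (tev A)) (X : tev A -> Prop) : higher_sym Phi ->
  tconfig X -> subset (dom Phi) X ->
  exists Phi', higher_sym Phi' /\ subrel Phi Phi' /\ (forall e, dom Phi' e <-> X e).
Proof.
  intros H HX Hsub; assert (Hcod := tunion_cod H).
  apply higher_symE in H; destruct H as [Hd [Hc [H1 H2]]].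
  set (xi := tunion X); assert (Hxi : sym A xi) by apply (sym_tunion HA HX).
  destruct (iso_ext (essp_isofam HA) H1 (x := dom xi) (sym_dom HA Hxi)) as [phi1 [Hp1 [Hs1 Hd1]]].
  { unfold hfst, xi; rewrite dom_img_rel, dom_tunion; intros a [e [He <-]]; exists e; auto. }
  destruct (iso_ext (essp_isofam HA) H2 (x := cod xi) (sym_cod HA Hxi)) as [phi2 [Hp2 [Hs2 Hd2]]].
  { unfold hsnd, xi; rewrite dom_img_rel, cod_tunion; intros a [e [He <-]]; exists e; auto. }
  apply set_ext in Hd1, Hd2.
  set (xi' := conjugate phi1 xi phi2).
  assert (Hxi' : sym A xi') by (apply sym_conjugate; auto).
  set (Phi' := fun e f => X e /\ primes xi' f /\ phi1 (tfst e) (tfst f)).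
  assert (Ed : dom Phi' = X).
  { apply set_ext; intro e; split; [intros [f [h _]]; auto|intro He].
    assert (Ha : dom phi1 (tfst e)) by (rewrite Hd1; exists (tsnd e); apply tunion_top; auto).
    assert (Hb : dom phi2 (tsnd e)) by (rewrite Hd2; exists (tfst e); apply tunion_top; auto).
    destruct Ha as [a' Ha], Hb as [b' Hb].
    destruct (ex_tev HA Hxi' (a := a') (b := b')) as [f [Hf Ht]].
    { apply conjugateE; exists (tfst e), (tsnd e); split; [|split]; auto; apply tunion_top; auto. }
    exists f; split; [|split]; auto; unfold tfst at 2; rewrite Ht; auto. }
  assert (Ec : cod Phi' = primes xi').
  { apply set_ext; intro f; split; [intros [e [_ [h _]]]; auto|intro Hf].
    destruct (proj1 (conjugateE _ _ _ _ _) (Hf _ _ (tev_top f))) as [a [b [Ha [Hab _]]]].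
    assert (He : dom xi a) by (exists b; auto).
    unfold xi in He; rewrite dom_tunion in He; destruct He as [e [He <-]].
    exists e; split; auto. }
  assert (E1 : phi1 = hfst Phi').
  { apply sym_eq_img_rel; auto; [|intros e f [_ [_ h]]; auto].
    intro a; rewrite Hd1, Ed; unfold xi; rewrite dom_tunion; tauto. }
  assert (E2 : phi2 = hsnd Phi').
  { apply sym_eq_img_rel; auto.
    - intro a; rewrite Hd2, Ed; unfold xi; rewrite cod_tunion; tauto.
    - intros e f [He [Hf Hef]].
      destruct (proj1 (conjugateE _ _ _ _ _) (Hf _ _ (tev_top f))) as [a [b [Ha [Hab Hb]]]].
      rewrite <- (sym_inj HA Hp1 Hef Ha) in Hab.
      rewrite <- (sym_fun HA Hxi (tunion_top He) Hab) in Hb; auto. }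
  exists Phi'; split; [|split].
  - apply higher_symE; rewrite Ed, Ec, <- E1, <- E2.
    split; [auto|split; [apply tconfig_primes; auto|auto]].
  - intros e f Hef; split; [apply Hsub; exists f; auto|split].
    + intros u v Huv; apply (conjugate_mono Hs1 (tunion_mono (X := dom Phi) Hsub) Hs2).
      rewrite <- Hcod; apply (trel_sub_tunion HA Hc (e := f)); [exists e|]; auto.
    + apply Hs1, img_rel_pair; auto.
  - rewrite Ed; tauto.
Qed.

Lemma higher_sym_isofam : is_isofam (E := tilde_esp A) (@higher_sym A).
Proof.
  split.
  - intros Phi H; assert (H' := H); apply higher_symE in H'.
    split; [apply H'|split; [apply H'|split; [apply is_bij_of_hfst; apply H'|]]].
    intros e f; apply higher_sym_pol; auto.
  - apply higher_sym_diag.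
  - apply higher_sym_inv.
  - apply higher_sym_comp.
  - apply higher_sym_restrict.
  - apply higher_sym_extend.
Qed.

Lemma tilde_essp : is_essp (tilde A).
Proof. split; [apply tilde_is_es; auto|apply higher_sym_isofam]. Qed.

End Higher.

(** * The map ~sigma *)

Section Map.
Variables S A : essp.
Variable s : ev S -> ev A.
Hypothesis HS : is_essp S.
Hypothesis HA : is_essp A.
Hypothesis Hsym : forall th, sym S th -> sym A (img_rel s th).

Definition tmap (e : tev S) : tev A :=
  exist _ (restrict (img_rel s (trel e)) (below (s (tfst e))), (s (tfst e), s (tsnd e)))
    (prime_restrict_below HA (Hsym (tev_sym e)) (img_rel_pair s (tev_top e))).

Lemma tmap_spec : tilde_map_spec s tmap.
Proof.
  intro e; split; [reflexivity|].
  symmetry; apply (prime_closure_below HA (Hsym (tev_sym e))), img_rel_pair, tev_top.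
Qed.

Lemma trel_tmap_sub th e : subrel (trel e) th -> subrel (trel (tmap e)) (img_rel s th).
Proof. intros H x y [Hxy _]; eapply img_rel_mono; eauto. Qed.

Lemma tmap_top e f : tmap e = f -> s (tfst e) = tfst f /\ s (tsnd e) = tsnd f.
Proof. intros <-; auto. Qed.

Lemma tmap_eq w e f : sym A w -> subrel (img_rel s (trel e)) w -> subrel (trel f) w ->
  tfst f = s (tfst e) -> tmap e = f.
Proof. intros Hw He Hf E; apply (tev_eq_of_tfst HA Hw); auto; intros x y [H _]; auto. Qed.

Lemma image_tmap (X : tev S -> Prop) : tconfig X -> image tmap X = primes (img_rel s (tunion X)).
Proof.
  intro HX; assert (Ht := sym_tunion HS HX); apply set_ext; intro f; split.
  - intros [e [He <-]]; apply trel_tmap_sub, trel_sub_tunion; auto.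
  - intro Hf; destruct (Hf _ _ (tev_top f)) as [a [b [[e [He Hte]] [Ea _]]]].
    exists e; split; auto; apply tmap_eq with (img_rel s (tunion X)); auto.
    + apply img_rel_mono, trel_sub_tunion; auto.
    + unfold tfst at 2; rewrite Hte; auto.
Qed.

Lemma tconfig_image_tmap (X : tev S -> Prop) : tconfig X -> tconfig (image tmap X).
Proof. intro HX; rewrite image_tmap; auto; apply tconfig_primes, Hsym, sym_tunion; auto. Qed.

Lemma tunion_image_tmap (X : tev S -> Prop) : tconfig X ->
  tunion (image tmap X) = img_rel s (tunion X).
Proof. intro HX; rewrite image_tmap; auto; apply tunion_primes, Hsym, sym_tunion; auto. Qed.

Lemma hfst_img_rel_tmap (Phi : rel (tev S)) : hfst (img_rel tmap Phi) = img_rel s (hfst Phi).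
Proof. unfold hfst; rewrite !img_rel_img_rel; reflexivity. Qed.

Lemma hsnd_img_rel_tmap (Phi : rel (tev S)) : hsnd (img_rel tmap Phi) = img_rel s (hsnd Phi).
Proof. unfold hsnd; rewrite !img_rel_img_rel; reflexivity. Qed.

Hypothesis Hmap : es_map s.
Hypothesis Hpol : forall a, pol (s a) = pol a.

Lemma tmap_inj (X : tev S -> Prop) e e' : tconfig X -> X e -> X e' -> tmap e = tmap e' -> e = e'.
Proof.
  intros HX He He' E; apply (tfst_inj HS HX He He').
  apply (proj2 Hmap _ (sym_dom HS (sym_tunion HS HX))); [| |exact (f_equal tfst E)];
    rewrite dom_tunion; eexists; eauto.
Qed.

Lemma higher_sym_tmap (Phi : rel (tev S)) : higher_sym Phi -> higher_sym (img_rel tmap Phi).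
Proof.
  rewrite (higher_symE HS), (higher_symE HA), hfst_img_rel_tmap, hsnd_img_rel_tmap,
    dom_img_rel, cod_img_rel.
  intros [Hd [Hc [H1 H2]]]; split; [|split; [|split]]; auto using tconfig_image_tmap.
Qed.

Lemma tmap_essp_map : essp_map (A := tilde S) (B := tilde A) tmap.
Proof.
  split; [apply tilde_essp; auto|split; [apply tilde_essp; auto|split; [split|split]]].
  - apply tconfig_image_tmap.
  - intros X HX e e' He He' E; apply (tmap_inj HX He He' E).
  - intro e; apply Hpol.
  - apply higher_sym_tmap.
Qed.

End Map.

Lemma pos_ext_img_rel (E F : esp) (f : ev E -> ev F) (r r1 : rel (ev E)) :
  (forall a, pol (f a) = pol a) -> pos_ext r r1 -> pos_ext (img_rel f r) (img_rel f r1).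
Proof.
  intros Hpol [Hs Hp]; split; [apply img_rel_mono; auto|].
  intros x y [a [b [Hab [<- <-]]]] Hn; rewrite Hpol; apply (Hp a b Hab).
  intro H; apply Hn, img_rel_pair; auto.
Qed.

Section Tilde.
Variable S : essp.
Hypothesis HS : is_essp S.

(* An event strictly between [tfst e] and [tfst e'] generates a prime strictly
   between [e] and [e']. *)
Lemma imm_tfst (e e' : tev S) : imm (E := tilde_esp S) e e' -> imm (tfst e) (tfst e').
Proof.
  intros [Hlt Hno]; split; [apply tev_lt_tfst; auto|].
  intros [c [[Hl1 Hn1] [Hl2 Hn2]]]; apply Hno.
  assert (Hs' := tev_sym e').
  assert (Hc : dom (trel e') c).
  { eapply config_down; [apply (sym_dom HS Hs')|exists (tsnd e'); apply tev_top|auto]. }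
  destruct Hc as [d Hcd]; destruct (ex_tev HS Hs' Hcd) as [e'' [Hsub Ht]].
  assert (E : tfst e'' = c) by (unfold tfst; rewrite Ht; auto).
  exists e''; split; split.
  - apply (tev_leq_of_tfst HS Hs'); [apply (proj1 Hlt)|auto|rewrite E; auto].
  - intros <-; auto.
  - exact Hsub.
  - intros ->; auto.
Qed.

Lemma pol_tsnd (e : tev S) : pol (tsnd e) = pol (tfst e).
Proof. symmetry; apply (sym_pol HS (tev_sym e) (tev_top e)). Qed.

Hypothesis Hthin : thin S.

(* The two induced symmetries of the union are unions of thin extensions in S;
   the union is bounded by the conjugate of its domain part. *)
Lemma tilde_thin : thin (tilde S).
Proof.
  intros Phi Phi1 Phi2 H H1 H2 Hpe1 Hpe2 [Z [HZ [Hz1 Hz2]]].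
  apply (higher_symE HS) in H, H1, H2; apply (higher_symE HS).
  destruct H as [_ [_ [Hp1 Hp2]]].
  destruct H1 as [Hd1 [Hc1 [Hq1 Hq2]]], H2 as [Hd2 [Hc2 [Hr1 Hr2]]].
  assert (HzS := sym_tunion HS HZ).
  assert (Hfst : sym S (hfst (union Phi1 Phi2))).
  { unfold hfst in *; rewrite img_rel_union.
    eapply Hthin; [exact Hp1|exact Hq1|exact Hr1|
                   apply (pos_ext_img_rel (E := tilde_esp S)); auto..|].
    exists (dom (tunion Z)); split; [apply (sym_dom HS HzS)|rewrite dom_tunion].
    split; rewrite dom_img_rel; intros a [e [He <-]]; exists e; auto. }
  assert (Hsnd : sym S (hsnd (union Phi1 Phi2))).
  { unfold hsnd in *; rewrite img_rel_union.
    eapply Hthin; [exact Hp2|exact Hq2|exact Hr2|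
                   apply (pos_ext_img_rel (E := tilde_esp S)); auto using pol_tsnd..|].
    exists (cod (tunion Z)); split; [apply (sym_cod HS HzS)|rewrite cod_tunion].
    split; rewrite dom_img_rel; intros a [e [He <-]]; exists e; auto. }
  assert (Hd : tconfig (dom (union Phi1 Phi2))).
  { rewrite dom_union; apply (tconfig_union Hd1 Hd2 HzS).
    intros e He; apply (trel_sub_tunion HS HZ); destruct He; auto. }
  set (eta := conjugate (hfst (union Phi1 Phi2)) (tunion (dom (union Phi1 Phi2)))
                        (hsnd (union Phi1 Phi2))).
  assert (Heta : sym S eta).
  { apply sym_conjugate; auto; [apply sym_tunion; auto| |];
      unfold hfst, hsnd; rewrite dom_img_rel; [rewrite dom_tunion|rewrite cod_tunion]; auto. }
  assert (Hsub : forall Phi', higher_sym Phi' -> subrel Phi' (union Phi1 Phi2) ->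
                 forall f, cod Phi' f -> subrel (trel f) eta).
  { intros Phi' H' Hs f Hf u v Huv.
    assert (Huv' := trel_sub_tunion HS (proj1 (proj2 (proj1 (higher_symE HS _) H'))) Hf Huv).
    rewrite (tunion_cod HS H') in Huv'.
    revert Huv'; apply conjugate_mono; try apply img_rel_mono; auto.
    apply tunion_mono; intros e [f' He]; exists f'; auto. }
  split; [auto|split; [|auto]].
  change (tconfig (cod (union Phi1 Phi2))); rewrite cod_union.
  apply (tconfig_union Hc1 Hc2 Heta).
  intros f [Hf|Hf]; [apply (Hsub Phi1)|apply (Hsub Phi2)]; auto;
    try (apply (higher_symE HS); auto); intros a b h; unfold union; auto.
Qed.

End Tilde.

Section Courteous.
Variables S A : essp.
Variable s : ev S -> ev A.
Hypothesis HS : is_essp S.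
Hypothesis HA : is_essp A.
Hypothesis Hsym : forall th, sym S th -> sym A (img_rel s th).
Hypothesis Hcourt : courteous s.

Lemma tmap_courteous : courteous (S := tilde S) (A := tilde A) (tmap HA Hsym).
Proof.
  intros e e' Himm Hp; simpl in Hp.
  destruct (Hcourt (imm_tfst HS Himm) Hp) as [[Hle Hne] Hno].
  split; [split|].
  - apply (tev_leq_of_tfst HA (Hsym (tev_sym e'))); auto.
    + apply trel_tmap_sub, (proj1 (proj1 Himm)).
    + apply trel_tmap_sub; intros u v h; exact h.
  - intro E; apply Hne, (f_equal tfst E).
  - intros [f [H1 H2]]; apply Hno; exists (tfst f).
    split; [apply (tev_lt_tfst HA H1)|apply (tev_lt_tfst HA H2)].
Qed.

End Courteous.

(** * Strong receptivity *)

Section Receptive.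
Variables S A : essp.
Variable s : ev S -> ev A.
Hypothesis HS : is_essp S.
Hypothesis HA : is_essp A.
Hypothesis Hpol : forall a, pol (s a) = pol a.
Hypothesis Hsym : forall th, sym S th -> sym A (img_rel s th).
Hypothesis Hrec : strong_receptive s.

Lemma receptive_unique th p q p' q' : sym S th -> pol (s p) = false -> pol (s q) = false ->
  ~ dom (img_rel s th) (s p) -> sym S (ext th p q) -> sym S (ext th p' q') ->
  s p' = s p -> s q' = s q -> p = p' /\ q = q'.
Proof.
  intros Hth Hp Hq Hf H H' Ep Eq.
  assert (Hs : sym A (ext (img_rel s th) (s p) (s q))) by (rewrite <- img_rel_ext; auto).
  destruct (Hrec Hth Hp Hq Hf Hs) as [x [_ Hu]].
  assert (E := Hu (p, q) (conj H (conj eq_refl eq_refl))).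
  rewrite (Hu (p', q') (conj H' (conj Ep Eq))) in E; injection E; auto.
Qed.

(* Receptivity applied to the identity symmetry on [x]. *)
Lemma receptive_add_unique (x : ev S -> Prop) y y' : config x ->
  config (fun z => x z \/ z = y) -> config (fun z => x z \/ z = y') ->
  s y' = s y -> pol y = false -> ~ image s x (s y) -> y = y'.
Proof.
  intros Hx Hy Hy' E Hp Hn.
  refine (proj1 (receptive_unique (th := diag x) _ _ _ _ _ _ E E)); rewrite ?Hpol; auto.
  - apply (iso_id (essp_isofam HS)); auto.
  - rewrite dom_img_rel, dom_diag; auto.
  - rewrite ext_diag; apply (iso_id (essp_isofam HS)); auto.
  - rewrite ext_diag; apply (iso_id (essp_isofam HS)); auto.
Qed.

Local Notation t := (tmap HA Hsym).

Section Step.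
Variable Phi : rel (tev S).
Variables a1 a2 : tev A.
Hypothesis HPhi : higher_sym Phi.
Hypothesis Hpa1 : pol (tfst a1) = false.
Hypothesis Hpa2 : pol (tfst a2) = false.
Hypothesis Hfresh : ~ dom (img_rel t Phi) a1.
Hypothesis HPsi : higher_sym (ext (img_rel t Phi) a1 a2).

Local Notation th := (tunion (dom Phi)).
Local Notation th' := (tunion (cod Phi)).

Definition solution (p : tev S * tev S) : Prop :=
  higher_sym (ext Phi (fst p) (snd p)) /\ t (fst p) = a1 /\ t (snd p) = a2.

Lemma higher_symE_Phi :
  tconfig (dom Phi) /\ tconfig (cod Phi) /\ sym S (hfst Phi) /\ sym S (hsnd Phi).
Proof. apply (higher_symE HS); auto. Qed.

Lemma tunion_dom_ext_img_rel :
  tconfig (fun f => image t (dom Phi) f \/ f = a1) /\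
  tunion (fun f => image t (dom Phi) f \/ f = a1) = ext (img_rel s th) (tfst a1) (tsnd a1).
Proof.
  destruct higher_symE_Phi as [Hd _]; assert (H := HPsi); apply (higher_symE HA) in H.
  rewrite dom_ext, dom_img_rel in H; split; [apply H|].
  rewrite tunion_add, tunion_image_tmap; auto.
Qed.

Lemma tunion_cod_ext_img_rel :
  tconfig (fun f => image t (cod Phi) f \/ f = a2) /\
  tunion (fun f => image t (cod Phi) f \/ f = a2) = ext (img_rel s th') (tfst a2) (tsnd a2).
Proof.
  destruct higher_symE_Phi as [_ [Hc _]]; assert (H := HPsi); apply (higher_symE HA) in H.
  rewrite cod_ext, cod_img_rel in H; split; [apply H|].
  rewrite tunion_add, tunion_image_tmap; auto.
Qed.

Lemma sym_ext_img_rel_dom : sym A (ext (img_rel s th) (tfst a1) (tsnd a1)).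
Proof.
  destruct tunion_dom_ext_img_rel as [H E]; rewrite <- E; apply sym_tunion; auto.
Qed.

Lemma sym_ext_img_rel_cod : sym A (ext (img_rel s th') (tfst a2) (tsnd a2)).
Proof.
  destruct tunion_cod_ext_img_rel as [H E]; rewrite <- E; apply sym_tunion; auto.
Qed.

Lemma sym_ext_img_rel_hfst : sym A (ext (img_rel s (hfst Phi)) (tfst a1) (tfst a2)).
Proof.
  assert (H := HPsi); apply (higher_symE HA) in H.
  rewrite hfst_ext, hfst_img_rel_tmap in H; apply H.
Qed.

Lemma sym_ext_img_rel_hsnd : sym A (ext (img_rel s (hsnd Phi)) (tsnd a1) (tsnd a2)).
Proof.
  assert (H := HPsi); apply (higher_symE HA) in H.
  rewrite hsnd_ext, hsnd_img_rel_tmap in H; apply H.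
Qed.

Lemma fresh_tfst : ~ dom (img_rel s th) (tfst a1).
Proof.
  destruct higher_symE_Phi as [Hd _]; destruct tunion_dom_ext_img_rel as [H _].
  intros [v Hv]; rewrite <- (tunion_image_tmap HS HA Hsym Hd) in Hv.
  destruct Hv as [f [[e [He <-]] Ht]].
  apply Hfresh; rewrite dom_img_rel; exists e; split; auto.
  apply (tfst_inj HA H); [left; exists e|right|unfold tfst at 1; rewrite Ht]; auto.
Qed.

Lemma fresh_tsnd : ~ cod (img_rel s th) (tsnd a1).
Proof.
  intros [u Hu]; apply fresh_tfst; exists (tsnd a1).
  rewrite <- (sym_inj HA sym_ext_img_rel_dom (b := tsnd a1) (a := u) (a' := tfst a1));
    [|left|right]; auto.
Qed.

Lemma fresh_hfst : ~ dom (img_rel s (hfst Phi)) (tfst a1).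
Proof. rewrite dom_img_rel, dom_hfst, <- dom_img_rel; apply fresh_tfst. Qed.

Lemma fresh_hsnd : ~ dom (img_rel s (hsnd Phi)) (tsnd a1).
Proof. rewrite dom_img_rel, dom_hsnd, <- cod_img_rel; apply fresh_tsnd. Qed.

Lemma solution_syms q1 q2 : higher_sym (ext Phi q1 q2) ->
  sym S (ext th (tfst q1) (tsnd q1)) /\ subrel (trel q1) (ext th (tfst q1) (tsnd q1)) /\
  sym S (ext th' (tfst q2) (tsnd q2)) /\ subrel (trel q2) (ext th' (tfst q2) (tsnd q2)) /\
  sym S (ext (hfst Phi) (tfst q1) (tfst q2)) /\ sym S (ext (hsnd Phi) (tsnd q1) (tsnd q2)).
Proof.
  intro H; apply (higher_symE HS) in H.
  rewrite dom_ext, cod_ext, hfst_ext, hsnd_ext in H; destruct H as [Hd [Hc [H1 H2]]].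
  rewrite <- !tunion_add.
  split; [apply sym_tunion; auto|split; [apply trel_sub_tunion; auto|]].
  split; [apply sym_tunion; auto|split; [apply trel_sub_tunion; auto|auto]].
Qed.

Lemma solution_unique p q : solution p -> solution q -> p = q.
Proof.
  destruct p as [p1 p2], q as [q1 q2]; intros [Hp [Ep1 Ep2]] [Hq [Eq1 Eq2]]; simpl in *.
  destruct (solution_syms Hp) as [Hp1 [Sp1 [Hp2 [Sp2 [Hp3 Hp4]]]]].
  destruct (solution_syms Hq) as [Hq1 [Sq1 [Hq2 [Sq2 [Hq3 Hq4]]]]].
  destruct (tmap_top Ep1) as [Fp1 Gp1], (tmap_top Ep2) as [Fp2 Gp2].
  destruct (tmap_top Eq1) as [Fq1 Gq1], (tmap_top Eq2) as [Fq2 Gq2].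
  assert (Hpd1 : pol (tsnd a1) = false) by (rewrite (pol_tsnd HA); auto).
  assert (Hpd2 : pol (tsnd a2) = false) by (rewrite (pol_tsnd HA); auto).
  destruct higher_symE_Phi as [Hd [_ [H1 H2]]].
  destruct (receptive_unique (th := th) (p := tfst p1) (q := tsnd p1) (p' := tfst q1)
              (q' := tsnd q1)) as [E1 E2]; rewrite ?Fp1, ?Gp1; auto using fresh_tfst, sym_tunion.
  destruct (receptive_unique (th := hfst Phi) (p := tfst p1) (q := tfst p2) (p' := tfst q1)
              (q' := tfst q2)) as [_ E3]; rewrite ?Fp1, ?Fp2; auto using fresh_hfst.
  destruct (receptive_unique (th := hsnd Phi) (p := tsnd p1) (q := tsnd p2) (p' := tsnd q1)
              (q' := tsnd q2)) as [_ E4]; rewrite ?Gp1, ?Gp2; auto using fresh_hsnd.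
  rewrite <- E1, <- E2 in Sq1; rewrite <- E3, <- E4 in Sq2.
  f_equal; [apply (tev_eq_of_tfst HS Hp1)|apply (tev_eq_of_tfst HS Hp2)]; auto.
Qed.

(* The three receptivity witnesses in [th], [hfst Phi] and [hsnd Phi] agree on
   the events they add to [dom th] and [cod th]; the new events of [cod Phi] and
   [Phi] itself are then obtained by conjugation. *)
Lemma solution_exists : exists p, solution p.
Proof.
  destruct higher_symE_Phi as [Hd [Hc [H1 H2]]].
  assert (Hth : sym S th) by (apply sym_tunion; auto).
  assert (Hpd1 : pol (tsnd a1) = false) by (rewrite (pol_tsnd HA); auto).
  assert (Hpd2 : pol (tsnd a2) = false) by (rewrite (pol_tsnd HA); auto).
  destruct (Hrec Hth Hpa1 Hpd1 fresh_tfst sym_ext_img_rel_dom)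
    as [[sc sd] [[Hs [Ec Ed]] _]]; simpl in Hs, Ec, Ed.
  destruct (Hrec H1 Hpa1 Hpa2 fresh_hfst sym_ext_img_rel_hfst)
    as [[x1 x2] [[Hx [Ex1 Ex2]] _]]; simpl in Hx, Ex1, Ex2.
  destruct (Hrec H2 Hpd1 Hpd2 fresh_hsnd sym_ext_img_rel_hsnd)
    as [[y1 y2] [[Hy [Ey1 Ey2]] _]]; simpl in Hy, Ey1, Ey2.
  assert (Hsc : ~ dom th sc).
  { intros [v Hv]; apply fresh_tfst; rewrite <- Ec; exists (s v); apply img_rel_pair; auto. }
  assert (Hsd : ~ cod th sd).
  { intros [u Hu]; apply fresh_tsnd; rewrite <- Ed; exists (s u); apply img_rel_pair; auto. }
  assert (Ex : sc = x1).
  { apply (receptive_add_unique (x := dom th)); try congruence.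
    - exact (sym_dom HS Hth).
    - rewrite <- (dom_ext th sc sd); exact (sym_dom HS Hs).
    - rewrite <- dom_hfst, <- (dom_ext _ x1 x2); exact (sym_dom HS Hx).
    - rewrite Ec, <- dom_img_rel; apply fresh_tfst. }
  subst x1.
  assert (Ey : sd = y1).
  { apply (receptive_add_unique (x := cod th)); try congruence.
    - exact (sym_cod HS Hth).
    - rewrite <- (cod_ext th sc sd); exact (sym_cod HS Hs).
    - rewrite <- dom_hsnd, <- (dom_ext _ y1 y2); exact (sym_dom HS Hy).
    - rewrite Ed, <- cod_img_rel; apply fresh_tsnd. }
  subst y1.
  assert (Hs' : sym S (ext th' x2 y2)).
  { rewrite (tunion_cod HS HPhi), <- (conjugate_ext (a := sc) (b := sd));
      rewrite ?dom_hfst, ?dom_hsnd; auto.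
    apply sym_conjugate; auto; rewrite ?dom_ext, ?cod_ext, ?dom_hfst, ?dom_hsnd; auto. }
  destruct (ex_tev HS Hs (a := sc) (b := sd)) as [p1 [Sp1 Tp1]]; [right; auto|].
  destruct (ex_tev HS Hs' (a := x2) (b := y2)) as [p2 [Sp2 Tp2]]; [right; auto|].
  assert (Fp1 : tfst p1 = sc) by (unfold tfst; rewrite Tp1; auto).
  assert (Gp1 : tsnd p1 = sd) by (unfold tsnd; rewrite Tp1; auto).
  assert (Fp2 : tfst p2 = x2) by (unfold tfst; rewrite Tp2; auto).
  assert (Gp2 : tsnd p2 = y2) by (unfold tsnd; rewrite Tp2; auto).
  exists (p1, p2); split; [|split]; simpl.
  - apply (higher_symE HS); rewrite dom_ext, cod_ext, hfst_ext, hsnd_ext, Fp1, Gp1, Fp2, Gp2.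
    rewrite <- (primes_tunion_add HS Hd (f := p1)), <- (primes_tunion_add HS Hc (f := p2));
      rewrite ?Fp1, ?Gp1, ?Fp2, ?Gp2; auto.
    split; [|split]; auto; apply tconfig_primes; auto.
  - destruct tunion_dom_ext_img_rel as [HdP EdP].
    apply tmap_eq with (ext (img_rel s th) (tfst a1) (tsnd a1)); auto using sym_ext_img_rel_dom.
    + rewrite <- Ec, <- Ed, <- img_rel_ext; apply img_rel_mono; auto.
    + rewrite <- EdP; apply trel_sub_tunion; auto.
    + rewrite Fp1; auto.
  - destruct tunion_cod_ext_img_rel as [HcP EcP].
    apply tmap_eq with (ext (img_rel s th') (tfst a2) (tsnd a2)); auto using sym_ext_img_rel_cod.
    + rewrite <- Ex2, <- Ey2, <- img_rel_ext; apply img_rel_mono; auto.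
    + rewrite <- EcP; apply trel_sub_tunion; auto.
    + rewrite Fp2; auto.
Qed.

End Step.

Lemma tmap_strong_receptive : strong_receptive (S := tilde S) (A := tilde A) t.
Proof.
  intros Phi HPhi a1 a2 Hpa1 Hpa2 Hfresh HPsi; apply (proj1 (unique_existence _)); split.
  - exact (solution_exists HPhi Hpa1 Hpa2 Hfresh HPsi).
  - exact (solution_unique HPhi Hpa1 Hpa2 Hfresh HPsi).
Qed.

End Receptive.

Theorem mainTheorem5 (S A : essp) (s : ev S -> ev A) :
  sim_strategy s ->
  exists t : ev (tilde S) -> ev (tilde A),
    tilde_map_spec s t /\ sim_strategy (S := tilde S) (A := tilde A) t.
Proof.
  intros [[HS [HA [Hmap [Hpol Hsym]]]] [Hcourt [Hrec Hthin]]].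
  exists (tmap HA Hsym); split; [apply tmap_spec|].
  split; [apply tmap_essp_map; auto|].
  split; [apply tmap_courteous; auto|].
  split; [apply tmap_strong_receptive; auto|].
  apply tilde_thin; auto.
Qed.
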